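(* Let $G$ be a graph on vertex set $[n]$. Suppose $v\in[n]$ has three distinct neighbours $R=\{r_1,r_2,r_3\}$ with $\deg(r_i)\geq 2$ for $i=1,2,3$, and assume that no triangle of $G$ contains $v$ and an element of $R$. (i) Then there is a $\triangle^+$-switch $(G,\widetilde{G})$ such that $\widetilde{G}$ contains a triangle $T$ with $v\in T$ and $R\cap T\neq\emptyset$. (ii) Furthermore, such a $\triangle^+$-switch can be chosen with $r_1\in T$, unless for $j=2$ and $j=3$ there is a $5$-cycle in $G$ containing the path $r_1vr_j$ but no $4$-cycle in $G$ contains this path.
   Context: A $\triangle^+$-switch on a graph $G$: given five distinct vertices $b_2,b_1,x,b_3,b_4$ such that $b_2b_1,b_1x,xb_3,b_3b_4$ are edges of $G$ and $b_1b_3$, $b_2b_4$ are non-edges of $G$, the graph $\widetilde{G}$ is obtained by deleting the edges $b_1b_2,b_3b_4$ and inserting the edges $b_1b_3,b_2b_4$ (so $\widetilde{G}$ has the same degree sequence as $G$ and contains the triangle $xb_1b_3$). *)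

From mathcomp Require Import all_boot.
Set Implicit Arguments. Unset Strict Implicit. Unset Printing Implicit Defensive.

Definition simple_graph (n : nat) (e : rel 'I_n) : Prop :=
  symmetric e /\ irreflexive e.

Definition deg (n : nat) (e : rel 'I_n) (u : 'I_n) : nat := #|[set w | e u w]|.

Definition is_triangle (n : nat) (e : rel 'I_n) (T : {set 'I_n}) : Prop :=
  #|T| = 3 /\ (forall a b, a \in T -> b \in T -> a != b -> e a b).

Definition is_pair (n : nat) (a b u w : 'I_n) : bool :=
  ((u == a) && (w == b)) || ((u == b) && (w == a)).

Definition switched (n : nat) (e : rel 'I_n) (b2 b1 x b3 b4 : 'I_n) : rel 'I_n :=
  fun u w =>
    (e u w && ~~ is_pair b1 b2 u w && ~~ is_pair b3 b4 u w)
    || is_pair b1 b3 u w || is_pair b2 b4 u w.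

Definition tswitch (n : nat) (e : rel 'I_n) (b2 b1 x b3 b4 : 'I_n) : Prop :=
  uniq [:: b2; b1; x; b3; b4] /\
  e b2 b1 /\ e b1 x /\ e x b3 /\ e b3 b4 /\
  ~~ e b1 b3 /\ ~~ e b2 b4.

Definition cycle4_through (n : nat) (e : rel 'I_n) (a v c : 'I_n) : Prop :=
  exists w, uniq [:: a; v; c; w] /\ e a v /\ e v c /\ e c w /\ e w a.

Definition cycle5_through (n : nat) (e : rel 'I_n) (a v c : 'I_n) : Prop :=
  exists w1 w2, uniq [:: a; v; c; w1; w2] /\
    e a v /\ e v c /\ e c w1 /\ e w1 w2 /\ e w2 a.

From mathcomp Require Import all_boot.
From Stdlib Require Import Classical_Prop.

(* Each r in R has a neighbour s other than v, and s is not adjacent to v.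
   A switch on a path of length four through v then creates a triangle on v
   and some r in two ways: along si ri v rj sj, trading ri si and rj sj for
   ri rj and si sj, when si and sj are distinct and non-adjacent; or along
   rk v ri s t, trading v rk and s t for v s and rk t, when t is not adjacent
   to rk.  For (i): if s1 = s2 the second switch applies with t = r2, if s1 s2
   is a non-edge the first one does, and otherwise the second switch applies
   for r2 with t = r3 or, when s2 r3 is a non-edge, for r1 with t = s2.
   For (ii): without a switch for r1, the second switch excludes every 4-cycle
   r1 v rj w, so s1 <> sj, and the first switch forces the edge sj s1, which
   closes the 5-cycle r1 v rj sj s1. *)

Set Implicit Arguments. Unset Strict Implicit. Unset Printing Implicit Defensive.

Section SimpleGraph.
Variables (n : nat) (e : rel 'I_n).

Lemma nonedge_neq c a b : e c a -> ~~ e c b -> a != b.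
Proof. by move=> ca; apply: contraNneq => <-. Qed.

Lemma other_neighbour r v : 1 < deg e r -> exists2 s, e r s & s != v.
Proof.
case/card_gt1P => s [t [+ + st]]; rewrite !inE => rs rt.
have [sv|] := eqVneq s v; last by exists s.
by exists t => //; rewrite -sv eq_sym.
Qed.

Hypothesis sg : simple_graph e.

Lemma edge_neq a b : e a b -> a != b.
Proof. by case: sg => _ irr; apply: contraTneq => ->; rewrite irr. Qed.

Lemma triangle_of_edges a b c : e a b -> e b c -> e a c -> is_triangle e [set a; b; c].
Proof.
case: sg => sym _ ab bc ac; split.
  by rewrite -setUA cardsU1 cards2 !inE negb_or !edge_neq.
move=> p q; rewrite !inE => /orP[/orP[]|] /eqP-> /orP[/orP[]|] /eqP->;
  by rewrite ?eqxx // => _; rewrite // sym.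
Qed.

End SimpleGraph.

Lemma is_pairC n (a b u w : 'I_n) : is_pair a b u w = is_pair a b w u.
Proof. by rewrite /is_pair orbC; congr (_ || _); apply: andbC. Qed.

Lemma is_pair_diag n (a b u : 'I_n) : a != b -> is_pair a b u u = false.
Proof.
by move=> ab; rewrite /is_pair andbC orbb; apply: contraNF ab => /andP[/eqP<- /eqP<-].
Qed.

Section Switch.
Variables (n : nat) (e : rel 'I_n) (b2 b1 x b3 b4 : 'I_n).
Local Notation e' := (switched e b2 b1 x b3 b4).

Lemma switched_simple : simple_graph e -> b1 != b3 -> b2 != b4 -> simple_graph e'.
Proof.
move=> [sym irr] d13 d24; split=> [u w|u].
  by rewrite /switched sym !(is_pairC _ _ u w).
by rewrite /switched irr (is_pair_diag u d13) (is_pair_diag u d24).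
Qed.

Lemma switched_at_x w : uniq [:: b2; b1; x; b3; b4] -> e x w -> e' x w.
Proof.
rewrite /= !inE !negb_or => /and4P[/and4P[_ d2x _ _] /and3P[d1x _ _] /andP[dx3 dx4] _] xw.
by rewrite /switched /is_pair xw (eq_sym x b1) (eq_sym x b2)
  (negbTE d1x) (negbTE d2x) (negbTE dx3) (negbTE dx4).
Qed.

Lemma switched_triangle : simple_graph e -> tswitch e b2 b1 x b3 b4 ->
  is_triangle e' [set x; b1; b3].
Proof.
move=> sg [U [_ [b1x [xb3 _]]]]; have [sym _] := sg.
have [d13 d24] : b1 != b3 /\ b2 != b4.
  by move: U; rewrite /= !inE !negb_or => /and4P[/and4P[_ _ _ ->] /and3P[_ -> _] _ _].
apply: triangle_of_edges; first exact: switched_simple.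
- by apply: switched_at_x; rewrite // sym.
- by rewrite /switched /is_pair !eqxx /= orbT.
- exact: switched_at_x.
Qed.

Lemma tswitch_of_path : simple_graph e ->
  e b2 b1 -> e b1 x -> e x b3 -> e b3 b4 -> ~~ e b1 b3 -> ~~ e b2 b4 ->
  b2 != x -> b1 != b3 -> x != b4 -> b2 != b4 -> tswitch e b2 b1 x b3 b4.
Proof.
move=> sg b21 b1x xb3 b34 n13 n24 d2x d13 dx4 d24; have [sym _] := sg.
have d23 : b2 != b3 by apply: nonedge_neq n13; rewrite sym.
have d14 : b1 != b4 by rewrite eq_sym (nonedge_neq b34) // sym.
split; last by [].
rewrite /= !inE !negb_or d2x d13 dx4 d24 d23 d14.
by rewrite (edge_neq sg b21) (edge_neq sg b1x) (edge_neq sg xb3) (edge_neq sg b34).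
Qed.

End Switch.

Definition triangle_switch n (e : rel 'I_n) (v r : 'I_n) : Prop :=
  exists b2 b1 x b3 b4, tswitch e b2 b1 x b3 b4 /\
    exists T : {set 'I_n}, is_triangle (switched e b2 b1 x b3 b4) T /\ v \in T /\ r \in T.

Section TriangleSwitches.
Variables (n : nat) (e : rel 'I_n) (v : 'I_n).
Hypothesis sg : simple_graph e.

Lemma triangle_switchI b2 b1 x b3 b4 r : tswitch e b2 b1 x b3 b4 ->
  v \in [set x; b1; b3] -> r \in [set x; b1; b3] -> triangle_switch e v r.
Proof.
move=> ts vT rT; exists b2, b1, x, b3, b4; split => //.
by exists [set x; b1; b3]; split => //; apply: switched_triangle.
Qed.

Lemma join_neighbours_switch ri rj si sj :
  e v ri -> e v rj -> ri != rj -> ~~ e ri rj -> e ri si -> e rj sj ->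
  si != v -> sj != v -> si != sj -> ~~ e si sj -> triangle_switch e v ri.
Proof.
move=> vi vj dij nij isi jsj siv sjv dss nss; have [sym _] := sg.
apply: (@triangle_switchI si ri v rj sj); rewrite ?inE ?eqxx ?orbT //.
by apply: tswitch_of_path; rewrite // 1?sym // eq_sym.
Qed.

Lemma join_second_neighbour_switch ri rk s t :
  e v ri -> e v rk -> ri != rk -> e ri s -> e s t -> s != v -> ~~ e v s ->
  ri != t -> rk != t -> ~~ e rk t -> triangle_switch e v ri.
Proof.
move=> vi vk dik ris st sv nvs dit dkt nkt; have [sym _] := sg.
apply: (@triangle_switchI rk v ri s t); rewrite ?inE ?eqxx ?orbT //.
by apply: tswitch_of_path; rewrite // 1?sym // eq_sym.
Qed.

Variable R : seq 'I_n.
Hypothesis R_adj : forall r, r \in R -> e v r.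
Hypothesis R_deg : forall r, r \in R -> 1 < deg e r.
Hypothesis R_free : forall r a, r \in R -> e r a -> ~~ e v a.

Lemma R_indep ri rj : ri \in R -> rj \in R -> ~~ e ri rj.
Proof. by move=> iR jR; apply: contraL (R_free iR) (R_adj jR). Qed.

Lemma triangle_switch_exists (ri rj rk : 'I_n) : ri \in R -> rj \in R -> rk \in R ->
  uniq [:: ri; rj; rk] -> exists2 r, r \in R & triangle_switch e v r.
Proof.
move=> iR jR kR; rewrite /= !inE !negb_or => /andP[/andP[dij dik] /andP[djk _]].
have [sym _] := sg.
have [si isi siv] := other_neighbour v (R_deg iR).
have [sj jsj sjv] := other_neighbour v (R_deg jR).
have [esij|dsij] := eqVneq si sj.
  exists ri => //; apply: (join_second_neighbour_switch (R_adj iR) (R_adj kR) dik isi _ siv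
    (R_free iR isi) dij _ (R_indep kR jR)); first by rewrite sym esij.
  by rewrite eq_sym.
have [sij|nsij] := boolP (e si sj); last first.
  by exists ri => //; apply: (join_neighbours_switch (R_adj iR) (R_adj jR) dij (R_indep iR jR)
    isi jsj siv sjv dsij nsij).
have [sjk|nsjk] := boolP (e sj rk).
  exists rj => //; apply: (join_second_neighbour_switch (R_adj jR) (R_adj iR) _ jsj sjk sjv
    (R_free jR jsj) djk dik (R_indep iR kR)).
  by rewrite eq_sym.
exists ri => //; apply: (join_second_neighbour_switch (R_adj iR) (R_adj kR) dik isi sij siv
  (R_free iR isi)); last by rewrite sym.
- by rewrite eq_sym (nonedge_neq jsj) ?R_indep.
- by rewrite eq_sym (nonedge_neq jsj) ?R_indep.
Qed.

Lemma cycles_of_no_switch (ri rj rk : 'I_n) : ri \in R -> rj \in R -> rk \in R ->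
  uniq [:: ri; rj; rk] -> ~ triangle_switch e v ri ->
  cycle5_through e ri v rj /\ ~ cycle4_through e ri v rj.
Proof.
move=> iR jR kR; rewrite /= !inE !negb_or => /andP[/andP[dij dik] /andP[djk _]] no_sw.
have [sym _] := sg.
have no_c4 : ~ cycle4_through e ri v rj.
  move=> [w [+ [_ [_ [jw wi]]]]]; rewrite /= !inE !negb_or => /and3P[_ /andP[_ vw] _].
  have iw : e ri w by rewrite sym.
  apply: no_sw; apply: (join_second_neighbour_switch (R_adj iR) (R_adj kR) dik iw _ _
    (R_free iR iw) dij _ (R_indep kR jR)); first by rewrite sym.
  1,2: by rewrite eq_sym.
split => //.
have [si isi siv] := other_neighbour v (R_deg iR).
have [sj jsj sjv] := other_neighbour v (R_deg jR).
have ri_sj : ri != sj by rewrite eq_sym (nonedge_neq jsj) ?R_indep.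
have rj_si : rj != si by rewrite eq_sym (nonedge_neq isi) ?R_indep.
have [vi vj] := (edge_neq sg (R_adj iR), edge_neq sg (R_adj jR)).
have dsij : si != sj.
  apply: contra_not_neq no_c4 => esij; exists si; split; last first.
    by rewrite -esij in jsj; rewrite sym (R_adj iR) (R_adj jR) jsj sym isi.
  by rewrite /= !inE !negb_or eq_sym vi dij (edge_neq sg isi) vj eq_sym siv rj_si.
have [sji|nsji] := boolP (e sj si); last first.
  case: no_sw; apply: (join_neighbours_switch (R_adj iR) (R_adj jR) dij (R_indep iR jR) isi jsj
    siv sjv dsij); by rewrite sym.
exists sj, si; split; last by rewrite sym (R_adj iR) (R_adj jR) jsj sji sym isi.
rewrite /= !inE !negb_or eq_sym vi dij ri_sj (edge_neq sg isi) vj eq_sym sjv eq_sym siv.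
by rewrite (edge_neq sg jsj) rj_si eq_sym dsij.
Qed.

End TriangleSwitches.

Theorem lemma2 (n : nat) (e : rel 'I_n) (v r1 r2 r3 : 'I_n) :
  simple_graph e ->
  uniq [:: r1; r2; r3] ->
  e v r1 -> e v r2 -> e v r3 ->
  1 < deg e r1 -> 1 < deg e r2 -> 1 < deg e r3 ->
  (forall T : {set 'I_n}, is_triangle e T ->
     ~ (v \in T /\ (r1 \in T \/ r2 \in T \/ r3 \in T))) ->
  (* (i) *)
  (exists b2 b1 x b3 b4, tswitch e b2 b1 x b3 b4 /\
     exists T : {set 'I_n}, is_triangle (switched e b2 b1 x b3 b4) T /\
       v \in T /\ (r1 \in T \/ r2 \in T \/ r3 \in T)) /\
  (* (ii) *)
  (~ (forall j, j \in [:: r2; r3] ->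
        cycle5_through e r1 v j /\ ~ cycle4_through e r1 v j) ->
   exists b2 b1 x b3 b4, tswitch e b2 b1 x b3 b4 /\
     exists T : {set 'I_n}, is_triangle (switched e b2 b1 x b3 b4) T /\
       v \in T /\ r1 \in T).
Proof.
move=> sg Ur vr1 vr2 vr3 d1 d2 d3 no_tri.
set R := [:: r1; r2; r3].
have in_R (T : {set 'I_n}) r : r \in R -> r \in T -> r1 \in T \/ r2 \in T \/ r3 \in T.
  by rewrite !inE => /or3P[]/eqP->; auto.
have R_cases (P : 'I_n -> Prop) : P r1 -> P r2 -> P r3 -> forall r, r \in R -> P r.
  by move=> ? ? ? r; rewrite !inE => /or3P[]/eqP->.
have R_adj := R_cases (e v) vr1 vr2 vr3.
have R_deg := R_cases (fun r => 1 < deg e r) d1 d2 d3.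
have R_free r a : r \in R -> e r a -> ~~ e v a.
  move=> rR ra; apply/negP => va; apply: (no_tri [set v; r; a]).
    exact: triangle_of_edges (R_adj r rR) ra va.
  by split; [rewrite !inE eqxx | apply: (in_R _ r rR); rewrite !inE eqxx orbT].
have [r1R r2R r3R] : [/\ r1 \in R, r2 \in R & r3 \in R] by rewrite !inE !eqxx !orbT.
split.
  have [r rR [b2 [b1 [x [b3 [b4 [ts [T [tT [vT rT]]]]]]]]]] :=
    triangle_switch_exists sg R_adj R_deg R_free r1R r2R r3R Ur.
  by exists b2, b1, x, b3, b4; split => //; exists T; do 2!split => //; apply: in_R rT.
move=> not_cycles; apply: NNPP => no_sw; apply: not_cycles => j.
have Ur' : uniq [:: r1; r3; r2].
  by move: Ur; rewrite /= !inE !negb_or (andbC (r1 != r2)) (eq_sym r2 r3).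
rewrite !inE => /orP[]/eqP->.
- by apply: (cycles_of_no_switch sg R_adj R_deg R_free r1R r2R r3R Ur).
- by apply: (cycles_of_no_switch sg R_adj R_deg R_free r1R r3R r2R Ur').
Qed.
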